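(* Let $\omega=\frac{-1+\sqrt{-3}}{2}$ and let $\frac rs$ be a rational number in lowest terms with $s>0$. If $\mathcal{S}_{\frac rs}(-\omega)=0$, or equivalently $q^2-q+1$ divides $\mathcal{S}_{\frac rs}(q)$, then $s$ is a multiple of $6$.
   Context: Let $q$ be a formal parameter, $R_q=\begin{pmatrix} q & 1\\ 0 & 1\end{pmatrix}$, $S_q=\begin{pmatrix} 0 & -q^{-1}\\ 1 & 0\end{pmatrix}$, and for integers $c_1,\dots,c_k$ put $M_q(c_1,\dots,c_k)=R_q^{c_1}S_q\cdots R_q^{c_k}S_q$. Every irreducible fraction $\frac{r}{s}>1$ has a unique negative continued fraction expansion $\frac{r}{s}=c_1-\cfrac{1}{c_2-\cfrac{1}{\ddots-\cfrac{1}{c_k}}}$ with all $c_i\ge 2$; define $\mathcal{S}_{\frac rs}(q)$ as the $(2,1)$-entry of $M_q(c_1,\dots,c_k)$. For an arbitrary rational $x$, define $\mathcal{S}_x(q):=\mathcal{S}_{x+m}(q)$ for any integer $m$ with $x+m>1$ (independent of $m$). Thus $\mathcal{S}_x(q)\in\mathbb{Z}[q]$ is the denominator of the $q$-deformed rational $[x]_q$, with $\mathcal{S}_x(0)=1$, and $\mathcal{S}_{\frac rs}(1)=s$. *)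

From mathcomp Require Import all_boot all_order all_algebra all_field.
Set Implicit Arguments. Unset Strict Implicit. Unset Printing Implicit Defensive.
Import Order.TTheory GRing.Theory Num.Theory.
Local Open Scope ring_scope.

Fixpoint ncf (cs : seq nat) : rat :=
  match cs with
  | [::] => 0
  | [:: c] => c%:R
  | c :: cs' => c%:R - (ncf cs')^-1
  end.

Definition Rq {F : fieldType} (q : F) : 'M[F]_2 :=
  \matrix_(i < 2, j < 2)
    if (i == 0 :> nat) && (j == 0 :> nat) then q
    else if (i == 0 :> nat) then 1 else if (j == 0 :> nat) then 0 else 1.

Definition Sq {F : fieldType} (q : F) : 'M[F]_2 :=
  \matrix_(i < 2, j < 2)
    if (i == 0 :> nat) && (j == 0 :> nat) then 0
    else if (i == 0 :> nat) then - q^-1 else if (j == 0 :> nat) then 1 else 0.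

Definition Mq {F : fieldType} (q : F) (cs : seq nat) : 'M[F]_2 :=
  foldr (fun c A => (Rq q ^+ c *m Sq q) *m A) 1%:M cs.

(* (2,1)-entry of M_q(cs), i.e. the value S_x(q) when cs is the negative
   continued fraction expansion of x + m > 1. *)
Definition Sval {F : fieldType} (q : F) (cs : seq nat) : F :=
  Mq q cs (inord 1) (inord 0).

Definition omega : algC := (-1 + sqrtC (-3)) / 2%:R.

From HB Require Import structures.
From mathcomp Require Import all_boot all_order all_algebra all_field.
From mathcomp Require Import ring zify.
Set Implicit Arguments. Unset Strict Implicit. Unset Printing Implicit Defensive.
Import Order.TTheory GRing.Theory Num.Theory.
Local Open Scope ring_scope.

(* The value q = -omega is a root of X^2 - X + 1 with q^-1 = 1 - q, so M_q has
   entries in Z[zeta] = Z[X]/(X^2 - X + 1) and S_{r/s}(q) = 0 holds already in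
   Z[zeta].  At q = 1 the same products are the continued-fraction matrices,
   whose (2,1)-entry is the denominator s.  Computing in the product ring
   Z[zeta]/6 x Z/6 with q = (zeta, 1), where R_q^6 = 1, the first column of
   M_q(c_1, ..., c_k) stays in the orbit of e_1 under the six maps R_q^c S_q;
   this orbit has 432 elements, and on each of them a vanishing (2,1)-entry in
   the first factor forces a vanishing (2,1)-entry in the second, i.e. 6 | s.
   Neither the reduction modulo 2 nor the one modulo 3 suffices on its own. *)

Lemma iter_mod T n m (f : T -> T) x :
  iter n f x = x -> iter m f x = iter (m %% n)%N f x.
Proof.
move=> fnx; rewrite {1}(divn_eq m n) addnC iterD; congr (iter _ f _).
by elim: (m %/ n)%N => //= k IHk; rewrite mulSn iterD IHk.
Qed.

Lemma ord2P (i : 'I_2) : i = 0 \/ i = 1.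
Proof. by case: i => [[|[|//]]] ?; [left | right]; apply: val_inj. Qed.

Section QMatrices.
Variable B : pzRingType.
Implicit Types (q qi : B) (A : 'M[B]_2) (c : nat) (cs : seq nat).

Definition mx2 (a b c d : B) : 'M[B]_2 :=
  \matrix_(i, j) if i == 0 then (if j == 0 then a else b) else (if j == 0 then c else d).

Lemma mx2_1 : mx2 1 0 0 1 = 1%:M.
Proof. by apply/matrixP => i j; rewrite !mxE; case: (ord2P i) (ord2P j) => -> [] ->. Qed.

Lemma mulmx_mx2 (a b c d : B) A :
  mx2 a b c d *m A = mx2 (a * A 0 0 + b * A 1 0) (a * A 0 1 + b * A 1 1)
                         (c * A 0 0 + d * A 1 0) (c * A 0 1 + d * A 1 1).
Proof.
have lift01 : lift ord0 ord0 = 1 :> 'I_2 by apply: val_inj.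
apply/matrixP => i j; rewrite !mxE !big_ord_recl big_ord0 !mxE addr0 lift01.
by case: (ord2P i) (ord2P j) => -> [] ->.
Qed.

(* M_q(cs) with the inverse of q supplied as qi, so that B need not be a field. *)
Definition Mmx q qi cs : 'M[B]_2 :=
  foldr (fun c A => mx2 q 1 0 1 ^+ c *m mx2 0 (- qi) 1 0 *m A) 1%:M cs.

Lemma Mmx_cons q qi c cs :
  Mmx q qi (c :: cs) = mx2 q 1 0 1 ^+ c *m mx2 0 (- qi) 1 0 *m Mmx q qi cs.
Proof. by []. Qed.

Definition Rrow q c : B * B := iter c (fun ab => (q * ab.1, q * ab.2 + 1)) (1, 0).

Lemma mx2_expr q c : mx2 q 1 0 1 ^+ c = mx2 (Rrow q c).1 (Rrow q c).2 0 1.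
Proof.
elim: c => [|c IHc]; first by rewrite expr0 mx2_1.
rewrite exprS -mulmxE IHc mulmx_mx2 !mxE /=.
by rewrite !mulr0 !mulr1 !mul0r !addr0 !add0r.
Qed.

Definition col2 A : B * B := (A 0 0, A 1 0).

Definition Mstep q qi c (v : B * B) : B * B :=
  ((Rrow q c).2 * v.1 - (Rrow q c).1 * qi * v.2, v.1).

Lemma col2_Mmx q qi cs : col2 (Mmx q qi cs) = foldr (Mstep q qi) (1, 0) cs.
Proof.
elim: cs => [|c cs IHcs]; first by rewrite /col2 !mxE.
rewrite Mmx_cons /= -IHcs /col2 /= mx2_expr !mulmx_mx2 !mxE /= /Mstep.
by rewrite !(mulr0, mul0r, mulr1, mul1r, addr0, add0r) mulrN mulNr.
Qed.

End QMatrices.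

Lemma map_mx2 (B B' : pzRingType) (f : {rmorphism B -> B'}) a b c d :
  map_mx f (mx2 a b c d) = mx2 (f a) (f b) (f c) (f d).
Proof. by apply/matrixP => i j; rewrite !mxE; case: (i == 0); case: (j == 0). Qed.

Lemma map_Mmx (B B' : pzRingType) (f : {rmorphism B -> B'}) q qi cs :
  map_mx f (Mmx q qi cs) = Mmx (f q) (f qi) cs.
Proof.
elim: cs => [|c cs IHcs]; first exact: map_mx1.
by rewrite !Mmx_cons !map_mxM IHcs rmorphXn /= !map_mx2 rmorph0 rmorph1 rmorphN.
Qed.

Lemma Mq_Mmx (F : fieldType) (q : F) cs : Mq q cs = Mmx q q^-1 cs.
Proof.
rewrite /Mq.
have -> : Rq q = mx2 q 1 0 1.
  by apply/matrixP => i j; rewrite !mxE; case: (ord2P i) (ord2P j) => -> [] ->.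
have -> : Sq q = mx2 0 (- q^-1) 1 0.
  by apply/matrixP => i j; rewrite !mxE; case: (ord2P i) (ord2P j) => -> [] ->.
by [].
Qed.

Lemma Sval_Mq (F : fieldType) (q : F) cs : Sval q cs = Mq q cs 1 0.
Proof. by rewrite /Sval; congr (Mq q cs _ _); apply: val_inj; rewrite /= inordK. Qed.

Section Eisenstein.
Variable R : comNzRingType.

(* R[zeta] = R[X]/(X^2 - X + 1), with a + b zeta stored as (a, b). *)
Definition eis : Type := (R * R)%type.
HB.instance Definition _ := GRing.Zmodule.copy eis (R * R)%type.

Definition eis_mul (x y : eis) : eis :=
  (x.1 * y.1 - x.2 * y.2, x.1 * y.2 + x.2 * y.1 + x.2 * y.2).

Fact eis_mulA : associative eis_mul.
Proof. by move=> [a b] [c d] [e f]; congr pair => /=; ring. Qed.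
Fact eis_mulC : commutative eis_mul.
Proof. by move=> [a b] [c d]; congr pair => /=; ring. Qed.
Fact eis_mul1 : left_id (1, 0) eis_mul.
Proof. by move=> [a b]; congr pair => /=; ring. Qed.
Fact eis_mulDl : left_distributive eis_mul +%R.
Proof. by move=> [a b] [c d] [e f]; congr pair => /=; ring. Qed.
Fact eis_one_neq0 : (1, 0) != 0 :> eis.
Proof. by rewrite xpair_eqE oner_eq0. Qed.

HB.instance Definition _ := GRing.Zmodule_isComNzRing.Build eis
  eis_mulA eis_mulC eis_mul1 eis_mulDl eis_one_neq0.

Definition zeta : eis := (0, 1).

Lemma zeta_sqr : zeta ^+ 2 = zeta - 1.
Proof. by congr pair => /=; ring. Qed.

End Eisenstein.

Section EisensteinEval.
Variables (C : comNzRingType) (z : C).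
Hypothesis z_sqr : z ^+ 2 = z - 1.

Definition eis_eval (x : eis int) : C := x.1%:~R + x.2%:~R * z.

Fact eis_eval_is_zmod_morphism : zmod_morphism eis_eval.
Proof. by move=> [a b] [c d]; rewrite /eis_eval /=; ring. Qed.

Fact eis_eval_is_monoid_morphism : monoid_morphism eis_eval.
Proof.
split=> [|[a b] [c d]]; first by rewrite /eis_eval /= mul0r addr0.
have z_root : z ^+ 2 - z + 1 = 0 by rewrite z_sqr; ring.
rewrite /eis_eval /=; transitivity
  ((a%:~R + b%:~R * z) * (c%:~R + d%:~R * z) - (b * d)%:~R * (z ^+ 2 - z + 1)).
  by ring.
by rewrite z_root mulr0 subr0.
Qed.

HB.instance Definition _ :=
  GRing.isZmodMorphism.Build (eis int) C eis_eval eis_eval_is_zmod_morphism.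
HB.instance Definition _ :=
  GRing.isMonoidMorphism.Build (eis int) C eis_eval eis_eval_is_monoid_morphism.

Lemma eis_eval_zeta : eis_eval (zeta int) = z.
Proof. by rewrite /eis_eval /= mul1r add0r. Qed.

Lemma eis_eval_Mmx cs :
  map_mx eis_eval (Mmx (zeta int) (1 - zeta int) cs) = Mmx z (1 - z) cs.
Proof.
by rewrite map_Mmx rmorphB rmorph1; congr (Mmx _ (1 - _) cs); exact: eis_eval_zeta.
Qed.

End EisensteinEval.

Lemma eis_eval_eq0 (C : numDomainType) (z : C) x :
  z ^+ 2 = z - 1 -> eis_eval z x = 0 -> x = 0.
Proof.
case: x => a b z_sqr; rewrite /eis_eval /= => ab0.
have norm0 : ((a * a + a * b + b * b)%:~R : C) = 0.
  transitivity ((a%:~R + b%:~R * z) * (a%:~R + b%:~R * (1 - z))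
                + (b * b)%:~R * (z ^+ 2 - z + 1) : C); first by ring.
  by rewrite ab0 z_sqr; ring.
move/eqP: norm0; rewrite intr_eq0 => /eqP norm0.
by congr pair; nia.
Qed.

Lemma oppomega_sqr : (- omega) ^+ 2 = - omega - 1.
Proof.
rewrite /omega; set t := sqrtC (-3); have t_sqr : t ^+ 2 = -3 := sqrtCK _.
apply/eqP; rewrite -subr_eq0; apply/eqP.
transitivity ((t ^+ 2 + 3%:R) / 4%:R : algC); first by field.
by rewrite t_sqr addNr mul0r.
Qed.

Lemma oppomega_inv : (- omega)^-1 = 1 - (- omega).
Proof. by apply: mulr1_eq; rewrite mulrBr mulr1 -expr2 oppomega_sqr; ring. Qed.

Lemma Sval_eis_eval cs :
  Sval (- omega) cs = eis_eval (- omega) (Mmx (zeta int) (1 - zeta int) cs 1 0).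
Proof.
by rewrite Sval_Mq Mq_Mmx oppomega_inv -(eis_eval_Mmx oppomega_sqr) mxE.
Qed.

Lemma Rrow1 (B : pzRingType) c : Rrow (1 : B) c = (1, c%:R).
Proof. by elim: c => //= c ->; rewrite !mul1r natr1. Qed.

Lemma Mstep1 c (v : int * int) : Mstep 1 1 c v = (c%:R * v.1 - v.2, v.1).
Proof. by rewrite /Mstep Rrow1 !mulr1 mul1r. Qed.

Lemma ncf_Mstep1 cs : cs != [::] -> all (leq 2) cs ->
  let uv := foldr (Mstep (1 : int) 1) (1, 0) cs in
  [/\ 0 < uv.2 < uv.1, coprimez uv.1 uv.2 & ncf cs = uv.1%:~R / uv.2%:~R].
Proof.
elim: cs => [//|c cs IHcs] _ /andP [c_ge2 cs_ge2].
have c_ge2z : 2 <= c%:R :> int by rewrite natz; lia.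
case: cs => [|d cs] in IHcs cs_ge2 *.
  by rewrite /= Rrow1 /= !mulr1 mulr0 subr0 /coprimez gcdz1; split => //; rewrite natz.
have -> : ncf [:: c, d & cs] = c%:R - (ncf (d :: cs))^-1 by [].
have -> : foldr (Mstep 1 1) (1, 0) [:: c, d & cs]
          = Mstep 1 1 c (foldr (Mstep 1 1) (1, 0) (d :: cs)) by [].
move: (foldr _ _ (d :: cs)) IHcs => [u v]; rewrite Mstep1.
case/(_ isT cs_ge2) => /= /andP [v_gt0 v_lt_u] uv_coprime ->.
split.
- apply/andP; split; nia.
- by rewrite coprimez_sym /coprimez gcdzMDl gcdzN.
- rewrite intrB intrM natz.
  by field; rewrite !intr_eq0; apply/andP; split; apply/eqP; lia.
Qed.

Lemma denq_ncf cs :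
  cs != [::] -> all (leq 2) cs -> denq (ncf cs) = Mmx (1 : int) 1 cs 1 0.
Proof.
move=> cs_ne cs_ge2; rewrite -[Mmx _ _ _ 1 0]/((col2 _).2) col2_Mmx.
have [/andP [v_gt0 _] uv_coprime ->] := ncf_Mstep1 cs_ne cs_ge2.
by rewrite coprimeq_den // gt_eqF // gtr0_norm.
Qed.

Lemma denq_frac_addz (r m : int) (s : nat) :
  (0 < s)%N -> coprime `|r| s -> denq (r%:~R / s%:R + m%:~R) = s.
Proof.
move=> s_gt0 rs_coprime.
have s_neq0 : s%:R != 0 :> rat by rewrite pnatr_eq0 -lt0n.
have -> : r%:~R / s%:R + m%:~R = (r + m * s)%:~R / (s%:Z)%:~R :> rat.
  by rewrite intrD intrM; field.
rewrite coprimeq_den; first by rewrite gt_eqF ?ltz_nat.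
rewrite -[coprime _ _]/(coprimez (r + m * s) s) coprimez_sym.
by rewrite /coprimez addrC gcdzMDl gcdzC.
Qed.

Definition P6 : comNzRingType := (eis 'Z_6 * 'Z_6)%type.
Definition q6 : P6 := (zeta _, 1).
Definition q6inv : P6 := (1 - zeta _, 1).

Definition orbit_grow (V : seq (P6 * P6)) : seq (P6 * P6) :=
  foldl (fun W v => if v \in W then W else v :: W) V
    [seq Mstep q6 q6inv c v | v <- V, c <- iota 0 6].

(* Five rounds suffice to reach all 432 elements of the orbit of e_1. *)
Definition orbit6 : seq (P6 * P6) := iter 5 orbit_grow [:: (1, 0)].

Definition orbit_ok (V : seq (P6 * P6)) : bool :=
  [&& (1, 0) \in V, all (fun v => all (fun c => Mstep q6 q6inv c v \in V) (iota 0 6)) V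
    & all (fun v => (v.2.1 == 0) ==> (v.2.2 == 0)) V].

Lemma orbit6_ok : orbit_ok orbit6.
Proof. by vm_compute. Qed.

Lemma Rrow_q6 : Rrow q6 6 = (1, 0).
Proof. by apply/eqP; vm_compute. Qed.

Lemma Mstep_q6_mod c : Mstep q6 q6inv c = Mstep q6 q6inv (c %% 6).
Proof. by rewrite /Mstep /Rrow -(iter_mod c Rrow_q6). Qed.

(* Stated for an arbitrary V: unification must never unfold orbit6. *)
Lemma orbit_ok_col2 V cs : orbit_ok V -> col2 (Mmx q6 q6inv cs) \in V.
Proof.
case/and3P => e1_V /allP V_closed _.
rewrite col2_Mmx; elim: cs => [|c cs IHcs] //=.
rewrite Mstep_q6_mod; apply: (allP (V_closed _ IHcs)).
by rewrite mem_iota ltn_mod.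
Qed.

Lemma Mmx_q6_den cs : (Mmx q6 q6inv cs 1 0).1 = 0 -> (Mmx q6 q6inv cs 1 0).2 = 0.
Proof.
have /and3P [_ _ /allP orbit_den] := orbit6_ok.
move=> S0; have /implyP := orbit_den _ (orbit_ok_col2 cs orbit6_ok).
by rewrite /col2 S0 eqxx => /(_ isT) /eqP.
Qed.

Lemma Mmx_q6_fst cs :
  (Mmx q6 q6inv cs 1 0).1 = eis_eval (zeta _) (Mmx (zeta int) (1 - zeta int) cs 1 0).
Proof.
have := congr1 (fun A : 'M_2 => A 1 0) (map_Mmx fst q6 q6inv cs).
by rewrite -(eis_eval_Mmx (zeta_sqr _)) !mxE.
Qed.

Lemma Mmx_q6_snd cs : (Mmx q6 q6inv cs 1 0).2 = (Mmx (1 : int) 1 cs 1 0)%:~R.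
Proof.
have := congr1 (fun A : 'M_2 => A 1 0) (map_Mmx snd q6 q6inv cs).
have := congr1 (fun A : 'M_2 => A 1 0) (map_Mmx (intr : int -> 'Z_6) 1 1 cs).
by rewrite !mxE rmorph1 => -> ->.
Qed.

Theorem proposition5p3 (r : int) (s : nat) (m : int) (cs : seq nat) :
  (0 < s)%N -> coprime `|r|%N s ->
  cs != [::] -> all (fun c => 2 <= c)%N cs ->
  ncf cs = r%:~R / s%:R + m%:~R ->
  Sval (- omega) cs = 0 ->
  (6 %| s)%N.
Proof.
move=> s_gt0 rs_coprime cs_ne cs_ge2 ncf_rs Sval0.
have den_s : Mmx (1 : int) 1 cs 1 0 = s by rewrite -denq_ncf // ncf_rs denq_frac_addz.
have eis0 : Mmx (zeta int) (1 - zeta int) cs 1 0 = 0.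
  by apply: (eis_eval_eq0 oppomega_sqr); rewrite -Sval_eis_eval.
have q6_fst0 : (Mmx q6 q6inv cs 1 0).1 = 0.
  by rewrite Mmx_q6_fst eis0 /eis_eval /= mul0r addr0.
have s_Z6 : (s%:R : 'Z_6) = 0.
  by have := Mmx_q6_den q6_fst0; rewrite Mmx_q6_snd den_s -pmulrn.
by move/(congr1 (@nat_of_ord _)): s_Z6; rewrite val_Zp_nat // => /eqP.
Qed.
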